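(* For every $n\geq1$, $$\sum_{\sigma\in\mathfrak S_n}(xy)^{{\rm M}(\sigma)}\Bigl(\frac{x+y}{2}\Bigr)^{n-2{\rm M}(\sigma)-1}\alpha^{{\rm LRmin}(\sigma)-1}\beta^{{\rm RLmin}(\sigma)-1}=\sum_{\sigma\in\mathfrak S_n}x^{{\rm des}(\sigma)}y^{n-{\rm des}(\sigma)-1}\Bigl(\frac{\alpha+\beta}{2}\Bigr)^{{\rm LRmin}(\sigma)+{\rm RLmin}(\sigma)-2}.$$
   Context: For $\sigma=\sigma_1\cdots\sigma_n\in\mathfrak S_n$: ${\rm des}(\sigma)$ is the number of $i\in[n-1]$ with $\sigma_i>\sigma_{i+1}$; ${\rm M}(\sigma)$ is the number of $i$ with $1<i<n$ and $\sigma_{i-1}<\sigma_i>\sigma_{i+1}$; ${\rm LRmin}(\sigma)$ is the number of $i$ with $\sigma_j>\sigma_i$ for all $j<i$; ${\rm RLmin}(\sigma)$ is the number of $i$ with $\sigma_j>\sigma_i$ for all $j>i$. Here $x,y,\alpha,\beta$ are indeterminates. *)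

From HB Require Import structures.
From mathcomp Require Import all_boot all_order all_algebra all_fingroup.
Set Implicit Arguments. Unset Strict Implicit. Unset Printing Implicit Defensive.

(* One-line notation of sigma in S_n (positions 0..n-1, values 0..n-1):
   w = [:: sigma_1; ...; sigma_n] shifted to 0-based values. *)
Definition pword n (s : 'S_n) : seq nat := [seq val (s i) | i <- enum 'I_n].

Definition des n (s : 'S_n) : nat :=
  let w := pword s in
  count (fun i => nth 0 w i.+1 < nth 0 w i)%N (iota 0 n.-1).

Definition peak n (s : 'S_n) : nat :=
  let w := pword s in
  count (fun i => (nth 0 w i < nth 0 w i.+1) && (nth 0 w i.+2 < nth 0 w i.+1))%N
        (iota 0 (n - 2)).

Definition LRmin n (s : 'S_n) : nat :=
  let w := pword s in
  count (fun i => all (fun j => nth 0 w i < nth 0 w j)%N (iota 0 i)) (iota 0 n).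

Definition RLmin n (s : 'S_n) : nat :=
  let w := pword s in
  count (fun i => all (fun j => nth 0 w i < nth 0 w j)%N (iota i.+1 (n - i.+1)))
        (iota 0 n).

(* Every permutation of 0..n arises exactly once by inserting the letter n into a
   permutation of 0..n-1 at one of its n+1 positions; we follow both weights through
   this insertion.  Write h = (x+y)/2 and c = (a+b)/2.  Inserting at the front or the
   back multiplies the left weight by ha or hb and the right weight by xc or yc, and
   h(a+b) = (x+y)c.  Inserting at an inner cut multiplies the right weight by y at a
   descent and by x at an ascent; the left weight is multiplied by h at the 2M cuts
   next to one of the M peaks, and elsewhere a new peak is created.  In both cases the inner cuts
   contribute exactly xy (d/dt) W(x+t, y+t, h+t) at t = 0, where W is the weight of the
   shorter word.  Since the induction hypothesis holds at the shifted values x+t, y+t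
   for every t, it also identifies these contributions. *)

From HB Require Import structures.
From mathcomp Require Import all_boot all_order all_algebra all_fingroup.
From mathcomp Require Import zify ring.
Set Implicit Arguments. Unset Strict Implicit. Unset Printing Implicit Defensive.
Import GRing.Theory Num.Theory.

(** * Statistics of words *)

Definition wdes (w : seq nat) :=
  count (fun i => nth 0 w i.+1 < nth 0 w i) (iota 0 (size w).-1).

Definition wpeak (w : seq nat) :=
  count (fun i => (nth 0 w i < nth 0 w i.+1) && (nth 0 w i.+2 < nth 0 w i.+1))
        (iota 0 (size w - 2)).

Definition wlrmin (w : seq nat) :=
  count (fun i => all (fun j => nth 0 w i < nth 0 w j) (iota 0 i)) (iota 0 (size w)).

Definition wrlmin (w : seq nat) :=
  count (fun i => all (fun j => nth 0 w i < nth 0 w j) (iota i.+1 (size w - i.+1)))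
        (iota 0 (size w)).

Definition lrmin_below (m : nat) (w : seq nat) :=
  count (fun i => (nth 0 w i < m) && all (fun j => nth 0 w i < nth 0 w j) (iota 0 i))
        (iota 0 (size w)).

(* [peak_after z s]: the first letter of [s] is a peak of [z :: s];
   [peak_before u y]: the last letter of [u] is a peak of [rcons u y]. *)
Definition peak_after (z : nat) (s : seq nat) :=
  if s is b :: c :: _ then (z < b) && (c < b) else false.

Fixpoint peak_before (u : seq nat) (y : nat) : bool :=
  if u is a :: u' then
    if u' is [:: b] then (a < b) && (y < b) else peak_before u' y
  else false.

Definition next_to_peak (u v : seq nat) :=
  peak_before u (head 0 v) || peak_after (last 0 u) v.

Lemma iota1 n : iota 1 n = map S (iota 0 n).
Proof. exact: (iotaDl 1 0 n). Qed.

Lemma wdes_cons2 x y t : wdes [:: x, y & t] = (y < x) + wdes (y :: t).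
Proof. by rewrite /wdes /= iota1 count_map. Qed.

Lemma wpeak_cons x s : wpeak (x :: s) = peak_after x s + wpeak s.
Proof. by case: s => [|y [|z t]] //; rewrite /wpeak /= iota1 count_map subn2. Qed.

Lemma wlrmin_cons x t : wlrmin (x :: t) = (lrmin_below x t).+1.
Proof.
rewrite /wlrmin /lrmin_below /= iota1 count_map add1n; congr _.+1.
by apply: eq_count => i /=; rewrite iota1 all_map.
Qed.

Lemma lrmin_below_cons m y t :
  lrmin_below m (y :: t) = (y < m) + lrmin_below (minn m y) t.
Proof.
rewrite /lrmin_below /= iota1 count_map andbT; congr (_ + _).
by apply: eq_count => i /=; rewrite iota1 all_map leq_min andbA.
Qed.

Lemma wrlmin_cons x t : wrlmin (x :: t) = all (fun z => x < z) t + wrlmin t.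
Proof.
rewrite /wrlmin /= [iota 1 (size t)]iota1 count_map subn1 /=; congr (_ + _).
  by rewrite iota1 all_map -[in RHS](mkseq_nth 0 t) /mkseq all_map.
apply: eq_count => i /=; rewrite subSS -(add1n i.+1) iotaDl all_map //.
Qed.

Lemma wdes_cat u y v :
  wdes (u ++ y :: v) = wdes u + ((u != [::]) && (y < last 0 u)) + wdes (y :: v).
Proof.
elim: u => [|a [|b t] IH] //=; first by rewrite wdes_cons2.
by rewrite !wdes_cons2 IH /= !addnA.
Qed.

Lemma wpeak_cat u y v :
  wpeak (u ++ y :: v) =
  wpeak u + peak_before u y + ((u != [::]) && peak_after (last 0 u) (y :: v))
    + wpeak (y :: v).
Proof.
elim: u => [|a [|b [|c t]] IH] //=.
- by rewrite wpeak_cons.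
- by rewrite wpeak_cons IH wpeak_cons /wpeak /=; lia.
- by rewrite wpeak_cons IH [wpeak [:: a, b, c & t]]wpeak_cons /=; lia.
Qed.

Lemma peak_after_lt z y v : peak_after z (y :: v) -> z < y.
Proof. by case: v => //= c v /andP[]. Qed.

Lemma peak_before_lt u y : peak_before u y -> y < last 0 u.
Proof. by elim: u => [|a [|b [|c t]] IH] //= /andP[]. Qed.

Lemma peak_before_after u y v :
  peak_before u y -> peak_after (last 0 u) (y :: v) = false.
Proof.
move=> /peak_before_lt lt_y; apply/negP => /peak_after_lt lt_u.
by have := ltn_trans lt_u lt_y; rewrite ltnn.
Qed.

Lemma lrmin_below_insert m n u v : m <= n -> all (fun z => z < n) u ->
  lrmin_below m (u ++ n :: v) = lrmin_below m (u ++ v).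
Proof.
elim: u m => [|a u IH] m le_mn /=.
  by rewrite lrmin_below_cons ltnNge le_mn (minn_idPl le_mn).
by case/andP => lt_an lt_un; rewrite !lrmin_below_cons IH // geq_min le_mn.
Qed.

Section InsertMax.
Variables (n : nat) (u v : seq nat).
Hypothesis lt_uv_n : all (fun z => z < n) (u ++ v).

Let last_u_lt : u != [::] -> last 0 u < n.
Proof.
case: u lt_uv_n => // a t; rewrite all_cat => /andP[lt_at _] _.
exact: (allP lt_at) _ (mem_last a t).
Qed.

Let head_v_lt : v != [::] -> head 0 v < n.
Proof. by case: v lt_uv_n => // b t; rewrite all_cat /= => /and3P[]. Qed.

Lemma wdes_insert_max : wdes (u ++ n :: v) = wdes u + (v != [::]) + wdes v.
Proof.
rewrite wdes_cat; have -> : (u != [::]) && (n < last 0 u) = false.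
  by case: eqP => //= /eqP /last_u_lt lt_u; apply/negbTE; rewrite -leqNgt ltnW.
move: head_v_lt; case: v => [|b t] // /(_ isT) /= lt_b.
by rewrite wdes_cons2 lt_b addn0 addnA.
Qed.

Lemma wpeak_insert_max :
  wpeak (u ++ n :: v) = wpeak u + ((u != [::]) && (v != [::])) + wpeak v.
Proof.
rewrite wpeak_cat wpeak_cons.
have -> : peak_before u n = false.
  apply/negP => /peak_before_lt lt_n.
  have nz_u : u != [::] by case: (u) lt_n.
  by have := last_u_lt nz_u; rewrite ltnNge ltnW.
move: head_v_lt; case: v => [|b t]; first by rewrite andbF addn0.
move=> /(_ isT) lt_b; rewrite /= in lt_b.
have -> : peak_after n (b :: t) = false.
  by apply/negP => /peak_after_lt; rewrite ltnNge (ltnW lt_b).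
have [-> // | nz_u] := eqVneq u [::].
by rewrite /= (last_u_lt nz_u) lt_b addn0.
Qed.

Lemma wlrmin_insert_max : wlrmin (u ++ n :: v) = wlrmin (u ++ v) + (u == [::]).
Proof.
case: u lt_uv_n => [|a t] /=.
  case: v => [|b t] //= /andP[lt_b _].
  by rewrite !wlrmin_cons lrmin_below_cons lt_b (minn_idPr (ltnW lt_b)) addn1.
case/andP=> lt_a; rewrite all_cat => /andP[lt_t _].
by rewrite !wlrmin_cons lrmin_below_insert ?addn0 // ltnW.
Qed.

Lemma wrlmin_insert_max : wrlmin (u ++ n :: v) = wrlmin (u ++ v) + (v == [::]).
Proof.
elim: u lt_uv_n => [|a t IH] /=.
  move=> lt_v; rewrite wrlmin_cons addnC; congr (_ + _).
  by case: v lt_v => [|b t] //= /andP[lt_b _]; rewrite ltnNge (ltnW lt_b).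
case/andP=> lt_a lt_tv; rewrite !wrlmin_cons IH // !all_cat /= lt_a.
by rewrite addnA.
Qed.

Lemma wdes_insert_max_inner : u != [::] -> v != [::] ->
  wdes (u ++ n :: v) = wdes (u ++ v) + ~~ (head 0 v < last 0 u).
Proof.
move=> nz_u nz_v; rewrite wdes_insert_max nz_v.
case: v nz_v => // y t _; rewrite wdes_cat nz_u /=.
by case: (y < last 0 u) => /=; lia.
Qed.

Lemma wpeak_insert_max_inner : u != [::] -> v != [::] ->
  wpeak (u ++ n :: v) =
  wpeak (u ++ v) + ~~ next_to_peak u v.
Proof.
move=> nz_u nz_v; rewrite wpeak_insert_max nz_u nz_v /next_to_peak.
case: v nz_v => // y t _; rewrite wpeak_cat nz_u [head _ _]/=.
case: (boolP (peak_before u y)) => [pb | _]; first by rewrite peak_before_after //=; lia.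
by case: peak_after => /=; lia.
Qed.
End InsertMax.

(** * Cutting a word in two *)

Definition inner_cuts (w : seq nat) := iota 1 (size w).-1.

Lemma inner_cutP w (k : nat) :
  k \in inner_cuts w -> (take k w != [::]) && (drop k w != [::]).
Proof.
rewrite mem_iota -!size_eq0 size_take_min size_drop => /andP[k_gt0 lt_k].
rewrite -subn1 in lt_k; rewrite -!lt0n leq_min subn_gt0 k_gt0 /=.
by apply/andP; split; lia.
Qed.

Definition count_splits (J : seq nat -> seq nat -> bool) w :=
  count (fun k => J (take k w) (drop k w)) (inner_cuts w).

Lemma count_splits_cons2 J x y t :
  count_splits J [:: x, y & t] =
  J [:: x] (y :: t) + count_splits (fun u v => J (x :: u) v) (y :: t).
Proof. by rewrite /count_splits /inner_cuts /= -[2]/(1 + 1) iotaDl count_map. Qed.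

Lemma eq_count_splits J1 J2 w :
  (forall u v, u != [::] -> v != [::] -> J1 u v = J2 u v) ->
  count_splits J1 w = count_splits J2 w.
Proof. by move=> eqJ; apply: eq_in_count => k /inner_cutP /andP[]; apply: eqJ. Qed.

Lemma count_splits_descent w : count_splits (fun u v => head 0 v < last 0 u) w = wdes w.
Proof.
elim: w => [|x [|y t] IH] //.
rewrite count_splits_cons2 wdes_cons2 -IH; congr (_ + _).
by apply: eq_count_splits => -[].
Qed.

Lemma count_splits_peak_after w :
  count_splits (fun u v => peak_after (last 0 u) v) w = wpeak w.
Proof.
elim: w => [|x [|y t] IH] //.
rewrite count_splits_cons2 wpeak_cons -IH; congr (_ + _).
by apply: eq_count_splits => -[].
Qed.

Lemma count_splits_peak_before w :
  count_splits (fun u v => peak_before u (head 0 v)) w = wpeak w.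
Proof.
elim: w => [|x [|y [|z t]] IH] //.
rewrite !count_splits_cons2 wpeak_cons -IH count_splits_cons2 /= add0n.
by congr (_ + _); apply: eq_count_splits => -[].
Qed.

Lemma count_splits_peak_adjacent w :
  count_splits next_to_peak w = 2 * wpeak w.
Proof.
rewrite mul2n -addnn -{1}(count_splits_peak_before w) -(count_splits_peak_after w).
rewrite /count_splits /next_to_peak -count_predUI.
rewrite [count (predI _ _) _](@eq_in_count _ _ pred0) ?count_pred0 ?addn0 //.
move=> k /inner_cutP /andP[_]; rewrite /=; case: (drop k w) => // y v _.
by rewrite [head _ _]/=; case: (boolP (peak_before _ _)) => // /peak_before_after ->.
Qed.

Lemma count_splits_lt J w : w != [::] -> count_splits J w < size w.
Proof.
move=> nz_w; rewrite (leq_ltn_trans (count_size _ _)) // size_iota ltn_predL.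
by rewrite lt0n size_eq0.
Qed.

Lemma wdes_lt w : w != [::] -> wdes w < size w.
Proof. by rewrite -count_splits_descent; apply: count_splits_lt. Qed.

Lemma wpeak_lt w : w != [::] -> 2 * wpeak w < size w.
Proof. by rewrite -count_splits_peak_adjacent; apply: count_splits_lt. Qed.

Lemma wlrmin_gt0 w : w != [::] -> 0 < wlrmin w.
Proof. by case: w => // x t _; rewrite wlrmin_cons. Qed.

Lemma wrlmin_gt0 w : w != [::] -> 0 < wrlmin w.
Proof.
elim: w => // x [|y t] IH _; first by [].
by rewrite wrlmin_cons (leq_trans (IH isT)) ?leq_addl.
Qed.

Lemma sum_inner_cuts_if (V : nmodType) J w (A B : V) :
  (\sum_(k <- inner_cuts w) (if J (take k w) (drop k w) then A else B) =
   A *+ count_splits J w + B *+ ((size w).-1 - count_splits J w))%R.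
Proof.
set P := fun k => J (take k w) (drop k w).
have -> : ((size w).-1 - count_splits J w = count (predC P) (inner_cuts w))%N.
  by rewrite -[X in (X - _)%N](size_iota 1) -(count_predC P) addKn.
rewrite (bigID P) /=; congr (_ + _)%R.
  by rewrite (eq_bigr (fun=> A)) ?big_const_seq ?iter_addr_0 // => k; apply: ifT.
by rewrite (eq_bigr (fun=> B)) ?big_const_seq ?iter_addr_0 // => k; apply: ifN.
Qed.

Lemma sum_insert_positions (V : nmodType) (F : seq nat -> seq nat -> V)
    (w : seq nat) : w != [::] ->
  (\sum_(k <- iota 0 (size w).+1) F (take k w) (drop k w) =
   F [::] w + \sum_(k <- inner_cuts w) F (take k w) (drop k w) + F w [::])%R.
Proof.
move=> nz_w; rewrite /= big_cons take0 drop0 -addrA; congr (_ + _)%R.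
have sw_gt0 : 0 < size w by rewrite lt0n size_eq0.
rewrite /inner_cuts -{1}(prednK sw_gt0) -[(size w).-1.+1]addn1 iotaD big_cat.
by rewrite big_seq1 add1n prednK // take_size drop_size.
Qed.

(** * Permutations as words *)

Definition words n := permutations (iota 0 n).

Lemma words_bounded n w : w \in words n -> all (fun z => z < n) w /\ size w = n.
Proof.
rewrite mem_permutations => perm_w; split; last by rewrite (perm_size perm_w) size_iota.
by apply/allP => z; rewrite (perm_mem perm_w) mem_iota.
Qed.

Lemma size_pword n (s : 'S_n) : size (pword s) = n.
Proof. by rewrite /pword size_map size_enum_ord. Qed.

Lemma pword_inj n : injective (@pword n).
Proof.
move=> s t eq_st; apply/permP => i; apply: val_inj.
have nth_pword (r : 'S_n) : nth 0 (pword r) i = r i.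
  by rewrite /pword (nth_map i) ?size_enum_ord // nth_ord_enum.
by rewrite /= -!nth_pword eq_st.
Qed.

Lemma perm_iota (w : seq nat) n :
  uniq w -> all (fun z => z < n) w -> size w = n -> perm_eq w (iota 0 n).
Proof.
move=> uniq_w lt_w size_w.
have sub_w : {subset w <= iota 0 n} by move=> z /(allP lt_w); rewrite mem_iota.
have le_size : size (iota 0 n) <= size w by rewrite size_iota size_w.
have [_ eq_w] := uniq_min_size uniq_w sub_w le_size.
exact: uniq_perm uniq_w (iota_uniq 0 n) eq_w.
Qed.

Lemma pword_words n (s : 'S_n) : pword s \in words n.
Proof.
rewrite mem_permutations perm_iota ?size_pword //.
  by rewrite map_inj_uniq ?enum_uniq // => i j /val_inj /perm_inj.
by apply/allP => _ /mapP[i _ ->]; apply: ltn_ord.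
Qed.

Lemma perm_eq_pwords n : perm_eq [seq pword s | s <- enum 'S_n] (words n).
Proof.
have uniq_pw : uniq [seq pword s | s <- enum 'S_n].
  by rewrite map_inj_uniq ?enum_uniq //; apply: pword_inj.
have sub_pw : {subset [seq pword s | s <- enum 'S_n] <= words n}.
  by move=> _ /mapP[s _ ->]; apply: pword_words.
have size_pw : size (words n) <= size [seq pword s | s <- enum 'S_n].
  by rewrite size_map -cardE card_Sn size_permutations ?iota_uniq // size_iota.
have [_ eq_pw] := uniq_min_size uniq_pw sub_pw size_pw.
by apply: uniq_perm; rewrite ?permutations_uniq.
Qed.

Lemma sum_perm_words (V : nmodType) n (F : seq nat -> V) :
  (\sum_(s : 'S_n) F (pword s) = \sum_(w <- words n) F w)%R.
Proof. by rewrite -(perm_big _ (perm_eq_pwords n)) big_map big_enum. Qed.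

Lemma perm_insert_max n u v :
  perm_eq (u ++ n :: v) (iota 0 n.+1) = perm_eq (u ++ v) (iota 0 n).
Proof.
rewrite (perm_catCA u [:: n] v) -addn1 iotaD cats1 /=.
apply/idP/idP => [perm_nuv | perm_uv].
  by rewrite -(perm_cons n) (perm_trans perm_nuv) // perm_rcons.
by rewrite perm_sym perm_rcons perm_cons perm_sym.
Qed.

Lemma perm_eq_words_insert_max n :
  perm_eq (words n.+1)
          (flatten [seq [seq take k w ++ n :: drop k w | k <- iota 0 n.+1] | w <- words n]).
Proof.
set L := flatten _.
have uniq_n1 : uniq (words n.+1) by apply: permutations_uniq.
have sub_n1 : {subset words n.+1 <= L}.
  move=> w; rewrite mem_permutations => perm_w.
  have n_w : n \in w by rewrite (perm_mem perm_w) mem_iota add0n ltnSn.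
  set i := index n w.
  have lt_i : i < size w by rewrite index_mem.
  have Ew : w = take i w ++ n :: drop i.+1 w.
    by rewrite -{1}(cat_take_drop i w) (drop_nth 0) // nth_index.
  have size_i : size (take i w) = i by rewrite size_takel // ltnW.
  apply/flatten_mapP; exists (take i w ++ drop i.+1 w).
    by rewrite mem_permutations -perm_insert_max -Ew.
  apply/mapP; exists i; last by rewrite take_size_cat // drop_size_cat // -Ew.
  by rewrite mem_iota /= -[n.+1](size_iota 0) -(perm_size perm_w).
have size_L : size L <= size (words n.+1).
  rewrite size_allpairs size_iota !size_permutations ?iota_uniq //.
  by rewrite !size_iota factS mulnC.
have [size_eq sub_L] := uniq_min_size uniq_n1 sub_n1 size_L.
by apply: uniq_perm; rewrite ?(uniq_size_uniq uniq_n1 sub_L) -?size_eq.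
Qed.

Lemma sum_words_insert_max (V : nmodType) n (F : seq nat -> V) :
  (\sum_(w <- words n.+1) F w =
   \sum_(w <- words n) \sum_(k <- iota 0 n.+1) F (take k w ++ n :: drop k w))%R.
Proof. by rewrite (perm_big _ (perm_eq_words_insert_max n)) big_allpairs_dep. Qed.

(** * Weights *)

Local Open Scope ring_scope.

Definition peak_monomial (R : comNzRingType) (x y h a b : R) (n p l r : nat) :=
  (x * y) ^+ p * h ^+ (n - 2 * p - 1) * a ^+ (l - 1) * b ^+ (r - 1).

Definition des_monomial (R : comNzRingType) (x y c : R) (n d l r : nat) :=
  x ^+ d * y ^+ (n - d - 1) * c ^+ (l + r - 2).

Section Monomials.
Variable R : comNzRingType.
Implicit Types (x y h a b c : R) (n p d l r : nat).

Lemma peak_monomialS x y h a b n p l r : (2 * p < n)%N ->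
  peak_monomial x y h a b n.+1 p l r = h * peak_monomial x y h a b n p l r.
Proof.
move=> lt_pn; rewrite /peak_monomial.
have -> : (n.+1 - 2 * p - 1 = (n - 2 * p - 1).+1)%N by lia.
by rewrite exprS; ring.
Qed.

Lemma peak_monomialSl x y h a b n p l r : (0 < l)%N ->
  peak_monomial x y h a b n p l.+1 r = a * peak_monomial x y h a b n p l r.
Proof. by case: l => // l _; rewrite /peak_monomial !subn1 /= exprS; ring. Qed.

Lemma peak_monomialSr x y h a b n p l r : (0 < r)%N ->
  peak_monomial x y h a b n p l r.+1 = b * peak_monomial x y h a b n p l r.
Proof. by case: r => // r _; rewrite /peak_monomial !subn1 /= exprS; ring. Qed.

Lemma des_monomialS x y c n d l r : (d < n)%N ->
  des_monomial x y c n.+1 d l r = y * des_monomial x y c n d l r.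
Proof.
move=> lt_dn; rewrite /des_monomial.
have -> : (n.+1 - d - 1 = (n - d - 1).+1)%N by lia.
by rewrite exprS; ring.
Qed.

Lemma des_monomialSS x y c n d l r :
  des_monomial x y c n.+1 d.+1 l r = x * des_monomial x y c n d l r.
Proof. by rewrite /des_monomial subSS exprS; ring. Qed.

Lemma des_monomialSl x y c n d l r : (1 < l + r)%N ->
  des_monomial x y c n d l.+1 r = c * des_monomial x y c n d l r.
Proof.
move=> lt_lr; rewrite /des_monomial.
have -> : (l.+1 + r - 2 = (l + r - 2).+1)%N by lia.
by rewrite exprS; ring.
Qed.

Lemma des_monomialSr x y c n d l r : (1 < l + r)%N ->
  des_monomial x y c n d l r.+1 = c * des_monomial x y c n d l r.
Proof.
move=> lt_lr; rewrite /des_monomial addnS -addSn.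
by rewrite -/(des_monomial _ _ _ _ _ l.+1 r) des_monomialSl.
Qed.

Lemma horner_peak_monomial_shift x y h a b n p l r t :
  (peak_monomial ('X + x%:P) ('X + y%:P) ('X + h%:P) a%:P b%:P n p l r).[t] =
  peak_monomial (t + x) (t + y) (t + h) a b n p l r.
Proof. by rewrite /peak_monomial !hornerE. Qed.

Lemma horner_des_monomial_shift x y c n d l r t :
  (des_monomial ('X + x%:P) ('X + y%:P) c%:P n d l r).[t] =
  des_monomial (t + x) (t + y) c n d l r.
Proof. by rewrite /des_monomial !hornerE. Qed.

Lemma peak_monomial_shift_deriv x y h a b n p l r : x + y = h *+ 2 ->
  x * y * (peak_monomial ('X + x%:P) ('X + y%:P) ('X + h%:P) a%:P b%:P n p l r)^`().[0] =
  (h * peak_monomial x y h a b n p l r) *+ (2 * p) +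
  peak_monomial x y h a b n.+1 p.+1 l r *+ (n.-1 - 2 * p).
Proof.
move=> xy_h; rewrite /peak_monomial !derivM !deriv_exp !derivM !derivD derivX !derivC.
rewrite !(hornerE, hornerMn) /= addr0 addrC xy_h.
have -> : (n.-1 - 2 * p = n - 2 * p - 1)%N by lia.
have -> : (n.+1 - 2 * p.+1 - 1 = (n - 2 * p - 1).-1)%N by lia.
by case: p => [|p]; case: (n - _ - 1)%N => [|k]; rewrite /= ?exprS; ring.
Qed.

Lemma des_monomial_shift_deriv x y c n d l r :
  x * y * (des_monomial ('X + x%:P) ('X + y%:P) c%:P n d l r)^`().[0] =
  (y * des_monomial x y c n d l r) *+ d + (x * des_monomial x y c n d l r) *+ (n.-1 - d).
Proof.
rewrite /des_monomial !derivM !deriv_exp !derivD derivX !derivC.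
rewrite !(hornerE, hornerMn) /=.
have -> : (n.-1 - d = n - d - 1)%N by lia.
by case: d => [|d]; case: (n - _ - 1)%N => [|k]; rewrite /= ?exprS; ring.
Qed.

End Monomials.

Definition peak_weight (R : comNzRingType) (x y h a b : R) (w : seq nat) :=
  peak_monomial x y h a b (size w) (wpeak w) (wlrmin w) (wrlmin w).

Definition des_weight (R : comNzRingType) (x y c : R) (w : seq nat) :=
  des_monomial x y c (size w) (wdes w) (wlrmin w) (wrlmin w).

Section InsertMaxWeight.
Variables (R : comNzRingType) (m : nat) (w : seq nat).
Hypotheses (nz_w : w != [::]) (lt_w_m : all (fun z => z < m)%N w).
Implicit Types (x y h a b c : R).

Let lt_nil_w : all (fun z => z < m)%N ([::] ++ w). Proof. by []. Qed.
Let lt_w_nil : all (fun z => z < m)%N (w ++ [::]). Proof. by rewrite cats0. Qed.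
Let lrmin_add_gt1 : (1 < wlrmin w + wrlmin w)%N.
Proof. exact: (leq_add (wlrmin_gt0 nz_w) (wrlmin_gt0 nz_w)). Qed.

Lemma peak_weight_insert_front x y h a b :
  peak_weight x y h a b (m :: w) = h * a * peak_weight x y h a b w.
Proof.
rewrite /peak_weight -[m :: w]cat0s (wpeak_insert_max lt_nil_w).
rewrite (wlrmin_insert_max lt_nil_w) (wrlmin_insert_max lt_nil_w) /= (negbTE nz_w).
rewrite !addn0 addn1.
by rewrite peak_monomialSl ?peak_monomialS ?wpeak_lt ?wlrmin_gt0 // mulrCA mulrA.
Qed.

Lemma peak_weight_insert_back x y h a b :
  peak_weight x y h a b (rcons w m) = h * b * peak_weight x y h a b w.
Proof.
rewrite /peak_weight -cats1 (wpeak_insert_max lt_w_nil) (wlrmin_insert_max lt_w_nil).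
rewrite (wrlmin_insert_max lt_w_nil) !cats0 size_cat addn1 (negbTE nz_w) andbF.
rewrite !addn0 addn1.
by rewrite peak_monomialSr ?peak_monomialS ?wpeak_lt ?wrlmin_gt0 // mulrCA mulrA.
Qed.

Lemma des_weight_insert_front x y c :
  des_weight x y c (m :: w) = x * c * des_weight x y c w.
Proof.
rewrite /des_weight -[m :: w]cat0s (wdes_insert_max lt_nil_w).
rewrite (wlrmin_insert_max lt_nil_w) (wrlmin_insert_max lt_nil_w) /= -[wdes [::]]/0%N.
rewrite nz_w (negbTE nz_w) addn0 addn1 add1n.
by rewrite des_monomialSS des_monomialSl // mulrA.
Qed.

Lemma des_weight_insert_back x y c :
  des_weight x y c (rcons w m) = y * c * des_weight x y c w.
Proof.
rewrite /des_weight -cats1 (wdes_insert_max lt_w_nil) (wlrmin_insert_max lt_w_nil).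
rewrite (wrlmin_insert_max lt_w_nil) !cats0 size_cat addn1 (negbTE nz_w) !addn0 addn1.
by rewrite des_monomialSr // des_monomialS ?wdes_lt //; ring.
Qed.

End InsertMaxWeight.

Section InsertMaxInner.
Variables (R : comNzRingType) (m : nat) (u v : seq nat).
Hypotheses (nz_u : u != [::]) (nz_v : v != [::]).
Hypothesis lt_uv_m : all (fun z => z < m)%N (u ++ v).
Implicit Types (x y h a b c : R).

Let size_insert : size (u ++ m :: v) = (size (u ++ v)).+1.
Proof. by rewrite !size_cat addnS. Qed.
Let nz_uv : u ++ v != [::].
Proof. by rewrite -size_eq0 size_cat addn_eq0 !size_eq0 negb_and nz_u. Qed.

Lemma peak_weight_insert_inner x y h a b :
  peak_weight x y h a b (u ++ m :: v) =
  if next_to_peak u v then h * peak_weight x y h a b (u ++ v)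
  else peak_monomial x y h a b (size (u ++ v)).+1 (wpeak (u ++ v)).+1
         (wlrmin (u ++ v)) (wrlmin (u ++ v)).
Proof.
rewrite /peak_weight size_insert (wpeak_insert_max_inner lt_uv_m nz_u nz_v).
rewrite (wlrmin_insert_max lt_uv_m) (wrlmin_insert_max lt_uv_m).
rewrite (negbTE nz_u) (negbTE nz_v).
by case: next_to_peak; rewrite /= !addn0 ?addn1 // peak_monomialS ?wpeak_lt.
Qed.

Lemma des_weight_insert_inner x y c :
  des_weight x y c (u ++ m :: v) =
  (if (head 0 v < last 0 u)%N then y else x) * des_weight x y c (u ++ v).
Proof.
rewrite /des_weight size_insert (wdes_insert_max_inner lt_uv_m nz_u nz_v).
rewrite (wlrmin_insert_max lt_uv_m) (wrlmin_insert_max lt_uv_m).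
rewrite (negbTE nz_u) (negbTE nz_v).
by case: ltnP => _; rewrite /= !addn0 ?addn1 ?des_monomialSS // des_monomialS ?wdes_lt.
Qed.

End InsertMaxInner.

Section InsertMaxSum.
Variables (R : comNzRingType) (m : nat) (w : seq nat).
Hypotheses (nz_w : w != [::]) (lt_w_m : all (fun z => z < m)%N w).
Implicit Types (x y h a b c : R).

Lemma sum_insert_max_peak_weight x y h a b : x + y = h *+ 2 ->
  \sum_(k <- iota 0 (size w).+1) peak_weight x y h a b (take k w ++ m :: drop k w) =
  h * (a + b) * peak_weight x y h a b w +
  x * y * (peak_weight ('X + x%:P) ('X + y%:P) ('X + h%:P) a%:P b%:P w)^`().[0].
Proof.
move=> xy_h.
rewrite (sum_insert_positions (fun u v => peak_weight x y h a b (u ++ m :: v))) //.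
rewrite cats1 peak_weight_insert_front // peak_weight_insert_back //.
rewrite (eq_big_seq (fun k => if next_to_peak (take k w) (drop k w)
    then h * peak_weight x y h a b w
    else peak_monomial x y h a b (size w).+1 (wpeak w).+1 (wlrmin w) (wrlmin w))).
  rewrite sum_inner_cuts_if count_splits_peak_adjacent.
  by rewrite /peak_weight peak_monomial_shift_deriv //; ring.
move=> k /inner_cutP /andP[nz_u nz_v].
by rewrite peak_weight_insert_inner ?cat_take_drop.
Qed.

Lemma sum_insert_max_des_weight x y c :
  \sum_(k <- iota 0 (size w).+1) des_weight x y c (take k w ++ m :: drop k w) =
  (x + y) * c * des_weight x y c w +
  x * y * (des_weight ('X + x%:P) ('X + y%:P) c%:P w)^`().[0].
Proof.
rewrite (sum_insert_positions (fun u v => des_weight x y c (u ++ m :: v))) //.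
rewrite cats1 des_weight_insert_front // des_weight_insert_back //.
rewrite (eq_big_seq (fun k => if (head 0 (drop k w) < last 0 (take k w))%N
    then y * des_weight x y c w else x * des_weight x y c w)).
  rewrite (sum_inner_cuts_if (fun u v => head 0 v < last 0 u)%N) count_splits_descent.
  by rewrite /des_weight des_monomial_shift_deriv; ring.
move=> k /inner_cutP /andP[nz_u nz_v].
by rewrite des_weight_insert_inner ?cat_take_drop //; case: ifP.
Qed.

End InsertMaxSum.

Lemma horner_peak_weight_shift (R : comNzRingType) (x y h a b t : R) w :
  (peak_weight ('X + x%:P) ('X + y%:P) ('X + h%:P) a%:P b%:P w).[t] =
  peak_weight (t + x) (t + y) (t + h) a b w.
Proof. exact: horner_peak_monomial_shift. Qed.

Lemma horner_des_weight_shift (R : comNzRingType) (x y c t : R) w :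
  (des_weight ('X + x%:P) ('X + y%:P) c%:P w).[t] = des_weight (t + x) (t + y) c w.
Proof. exact: horner_des_monomial_shift. Qed.

Lemma eq_poly_horner (R : numDomainType) (p q : {poly R}) :
  (forall t, p.[t] = q.[t]) -> p = q.
Proof.
move=> eq_pq; apply/eqP; rewrite -subr_eq0; apply/eqP.
apply: (@roots_geq_poly_eq0 _ _ [seq i%:R | i <- iota 0 (size (p - q))]).
- by apply/allP => z _; rewrite /root hornerD hornerN eq_pq subrr.
- by rewrite map_inj_uniq ?iota_uniq // => i j /eqP; rewrite eqr_nat => /eqP.
- by rewrite size_map size_iota.
Qed.

Section WordsSucc.
Variables (R : comNzRingType) (n : nat).
Implicit Types (x y h a b c : R).

Lemma sum_words_succ_peak_weight x y h a b : x + y = h *+ 2 ->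
  \sum_(w <- words n.+2) peak_weight x y h a b w =
  h * (a + b) * \sum_(w <- words n.+1) peak_weight x y h a b w +
  x * y * (\sum_(w <- words n.+1)
             peak_weight ('X + x%:P) ('X + y%:P) ('X + h%:P) a%:P b%:P w)^`().[0].
Proof.
move=> xy_h; rewrite sum_words_insert_max raddf_sum horner_sum !mulr_sumr -big_split.
apply: eq_big_seq => w /words_bounded[lt_w size_w].
have nz_w : w != [::] by rewrite -size_eq0 size_w.
by rewrite -{1}size_w (sum_insert_max_peak_weight nz_w lt_w _ _ xy_h).
Qed.

Lemma sum_words_succ_des_weight x y c :
  \sum_(w <- words n.+2) des_weight x y c w =
  (x + y) * c * \sum_(w <- words n.+1) des_weight x y c w +
  x * y * (\sum_(w <- words n.+1) des_weight ('X + x%:P) ('X + y%:P) c%:P w)^`().[0].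
Proof.
rewrite sum_words_insert_max raddf_sum horner_sum !mulr_sumr -big_split.
apply: eq_big_seq => w /words_bounded[lt_w size_w].
have nz_w : w != [::] by rewrite -size_eq0 size_w.
by rewrite -{1}size_w (sum_insert_max_des_weight nz_w lt_w).
Qed.

End WordsSucc.

Lemma sum_words_peak_des_weight (R : numFieldType) n : (0 < n)%N -> forall x y a b : R,
  \sum_(w <- words n) peak_weight x y ((x + y) / 2%:R) a b w =
  \sum_(w <- words n) des_weight x y ((a + b) / 2%:R) w.
Proof.
elim: n => // n IH _ x y a b; case: n IH => [_ | n IH].
  rewrite /words /= !big_seq1 /peak_weight /des_weight.
  rewrite -[wpeak _]/0%N -[wdes _]/0%N -[wlrmin _]/1%N -[wrlmin _]/1%N.
  by rewrite /peak_monomial /des_monomial /= !expr0 !mulr1.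
set h := (x + y) / 2%:R; set c := (a + b) / 2%:R.
have xy_h : x + y = h *+ 2 by rewrite /h -mulr_natr divfK // pnatr_eq0.
(* The induction hypothesis at [x + t], [y + t], as an identity of polynomials in [t]. *)
have shifted_IH :
  \sum_(w <- words n.+1) peak_weight ('X + x%:P) ('X + y%:P) ('X + h%:P) a%:P b%:P w =
  \sum_(w <- words n.+1) des_weight ('X + x%:P) ('X + y%:P) c%:P w.
  apply: eq_poly_horner => t; rewrite !horner_sum.
  under eq_bigr do rewrite horner_peak_weight_shift.
  under [RHS]eq_bigr do rewrite horner_des_weight_shift.
  have -> : t + h = ((t + x) + (t + y)) / 2%:R by rewrite /h; field.
  exact: IH.
rewrite sum_words_succ_peak_weight // sum_words_succ_des_weight IH // shifted_IH.
by congr (_ + _); rewrite /h /c; ring.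
Qed.

Section PermutationStatistics.
Variables (n : nat) (s : 'S_n).

Lemma des_pword : des s = wdes (pword s). Proof. by rewrite /wdes size_pword. Qed.
Lemma peak_pword : peak s = wpeak (pword s). Proof. by rewrite /wpeak size_pword. Qed.
Lemma LRmin_pword : LRmin s = wlrmin (pword s). Proof. by rewrite /wlrmin size_pword. Qed.
Lemma RLmin_pword : RLmin s = wrlmin (pword s). Proof. by rewrite /wrlmin size_pword. Qed.

End PermutationStatistics.

Theorem theorem1p9 (R : numFieldType) (n : nat) (hn : (1 <= n)%N)
    (x y a b : R) :
  \sum_(s : 'S_n)
     (x * y) ^+ peak s * ((x + y) / 2%:R) ^+ (n - 2 * peak s - 1)
       * a ^+ (LRmin s - 1) * b ^+ (RLmin s - 1)
  = \sum_(s : 'S_n)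
     x ^+ des s * y ^+ (n - des s - 1)
       * ((a + b) / 2%:R) ^+ (LRmin s + RLmin s - 2).
Proof.
transitivity (\sum_(s : 'S_n) peak_weight x y ((x + y) / 2%:R) a b (pword s)).
  apply: eq_bigr => s _.
  by rewrite /peak_weight /peak_monomial size_pword peak_pword LRmin_pword RLmin_pword.
transitivity (\sum_(s : 'S_n) des_weight x y ((a + b) / 2%:R) (pword s)).
  by rewrite !sum_perm_words sum_words_peak_des_weight.
apply: eq_bigr => s _.
by rewrite /des_weight /des_monomial size_pword des_pword LRmin_pword RLmin_pword.
Qed.
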